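(* In the content-oblivious BFS algorithm $\mathcal{A}$ run with root $r$ on a connected graph $G$, for every $k\ge1$ such that the root performs at least $k$ invocations of Explore, the following hold at the end of the root's $k$-th invocation of Explore, regardless of message delays, delivery order and contents: - every node at distance exactly $k$ from $r$ has set its parent to a neighbour at distance $k-1$ from $r$, and has left state $\mathsf{INIT}$; - every node at distance greater than $k$ from $r$ is still in state $\mathsf{INIT}$.
   Context: Asynchronous model: there are no timing assumptions, and messages are not necessarily delivered in FIFO order. A node is asleep until it receives a message. On receiving one, it performs local computation, sends zero or more messages to neighbours, and goes back to sleep. Each node knows $n$ and its neighbour set $\mathcal{N}_u$. Algorithm $\mathcal{A}$ (content-oblivious BFS). Nodes ignore the contents of all messages; decisions depend only on from which neighbour a message arrives. Every node $u$ has variables $\mathrm{state}_u\in\{\mathsf{INIT},\mathsf{IDLE},\mathsf{EXPLORE},\mathsf{DONE}\}$, $\mathrm{parent}_u$, $\mathrm{children}_u$ and $\mathrm{count}_u$. All nodes start in $\mathsf{INIT}$. The root $r$ sets $\mathrm{parent}_r=\bot$, $\mathrm{children}_r=\mathcal{N}_r$, $\mathrm{count}_r=0$ and $\mathrm{state}_r=\mathsf{IDLE}$. It then repeatedly invokes Explore until $\mathrm{state}_r=\mathsf{DONE}$. The nodes handle incoming messages as follows. (i) SetParent: a node $u$ in $\mathsf{INIT}$ that receives a message from $v$ sets $\mathrm{parent}_u=v$, $\mathrm{children}_u=\mathcal{N}_u\setminus\{v\}$, $\mathrm{count}_u=0$ and $\mathrm{state}_u=\mathsf{IDLE}$, and sends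 a message to $v$. (ii) MarkSibling: a node $u$ in $\mathsf{IDLE}$ or $\mathsf{DONE}$ that receives a message from some $v\neq\mathrm{parent}_u$ removes $v$ from $\mathrm{children}_u$ and sends a message to $v$. (iii) Explore: a node $u$ in $\mathsf{IDLE}$ that receives a message from $\mathrm{parent}_u$ (or the root, when it invokes Explore) proceeds as follows. - It sets $\mathrm{state}_u=\mathsf{EXPLORE}$ and increments $\mathrm{count}_u$. - Sequentially, for each $v\in\mathcal{N}_u\setminus\{\mathrm{parent}_u\}$, it sends a message to $v$ and waits until it receives a message from $v$. - If $\mathrm{count}_u=n-1$, it performs an extra ''dummy'' exploration: sequentially, for each $v\in\mathrm{children}_u$, it sends a message to $v$ and waits for a message from $v$. - It then sends a message to $\mathrm{parent}_u$; the root skips this step. - Finally it sets $\mathrm{state}_u=\mathsf{DONE}$ if $\mathrm{count}_u=n-1$, and $\mathrm{state}_u=\mathsf{IDLE}$ otherwise. *)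

From HB Require Import structures.
From mathcomp Require Import all_boot.
Set Implicit Arguments. Unset Strict Implicit. Unset Printing Implicit Defensive.

Inductive status := INIT | IDLE | EXPLORE | DONE.

(* which loop of Explore a node is currently executing *)
Inductive phase := MainLoop | DummyLoop.

Section Algo.
Variables (V : finType) (e : rel V) (r : V).

Definition nbrs (u : V) : {set V} := [set v | e u v].

(* the number of nodes n, known to every node *)
Definition nnodes : nat := #|V|.

(* local state of a node.  st, par (None = bottom), chl, cnt are the paper's
   variables; ph / todo / wait encode the program counter of the sequential
   Explore procedure: the loop being executed, the neighbours of that loop not
   yet contacted, and the neighbour whose answer is being awaited. *)
Record local := Local {
  st : status; par : option V; chl : {set V}; cnt : nat;
  ph : phase; todo : {set V}; wait : option V }.

(* global configuration: local states and the in-flight messages; since the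
   algorithm ignores contents, a message is identified by its sender and
   receiver, and chan a b is the number of messages in transit from a to b
   (no FIFO order). *)
Record config := Config { loc : V -> local; chan : V -> V -> nat }.

Definition init_local : local := Local INIT None set0 0 MainLoop set0 None.
Definition init_config : config := Config (fun _ => init_local) (fun _ _ => 0).

Definition parset (o : option V) : {set V} := if o is Some p then [set p] else set0.

(* Continue an Explore in progress that is not currently waiting:
   proceed l l' s  -- the node goes from local state l to l' and sends a
   message to s (if s = Some w) or nothing (s = None).  The order in which
   neighbours are visited is arbitrary (nondeterministic). *)
Inductive proceed : local -> local -> option V -> Prop :=
| pr_send l w : st l = EXPLORE -> wait l = None -> w \in todo l ->
    proceed l (Local EXPLORE (par l) (chl l) (cnt l) (ph l) (todo l :\ w) (Some w))
            (Some w)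
| pr_dummy l l' s : st l = EXPLORE -> wait l = None -> ph l = MainLoop ->
    todo l = set0 -> cnt l = nnodes - 1 ->
    proceed (Local EXPLORE (par l) (chl l) (cnt l) DummyLoop (chl l) None) l' s ->
    proceed l l' s
| pr_finish l : st l = EXPLORE -> wait l = None -> todo l = set0 ->
    (ph l = DummyLoop \/ cnt l <> nnodes - 1) ->
    proceed l (Local (if cnt l == nnodes - 1 then DONE else IDLE)
                     (par l) (chl l) (cnt l) (ph l) set0 None)
            (par l).  (* send to parent; the root (par = None) skips it *)

Definition start_explore (u : V) (l : local) : local :=
  Local EXPLORE (par l) (chl l) (cnt l).+1 MainLoop (nbrs u :\: parset (par l)) None.

(* node u, in local state l, receives a message from v *)
Inductive handle (u v : V) : local -> local -> option V -> Prop :=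
| h_setparent l : st l = INIT ->
    handle u v l (Local IDLE (Some v) (nbrs u :\ v) 0 (ph l) (todo l) (wait l)) (Some v)
| h_marksibling l : (st l = IDLE \/ st l = DONE) -> par l <> Some v ->
    handle u v l (Local (st l) (par l) (chl l :\ v) (cnt l) (ph l) (todo l) (wait l))
           (Some v)
| h_explore l l' s : st l = IDLE -> par l = Some v ->
    proceed (start_explore u l) l' s -> handle u v l l' s
| h_reply l l' s : st l = EXPLORE -> wait l = Some v ->
    proceed (Local EXPLORE (par l) (chl l) (cnt l) (ph l) (todo l) None) l' s ->
    handle u v l l' s
(* situations not covered by the algorithm: the message is consumed and
   ignored (these never occur in actual executions) *)
| h_ignore l : (st l = DONE /\ par l = Some v) \/ (st l = EXPLORE /\ wait l <> Some v) ->
    handle u v l l None.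

Definition upd_loc (f : V -> local) (u : V) (l : local) : V -> local :=
  fun x => if x == u then l else f x.

Definition send (ch : V -> V -> nat) (u : V) (s : option V) : V -> V -> nat :=
  if s is Some w then fun a b => if (a == u) && (b == w) then (ch a b).+1 else ch a b
  else ch.

Definition consume (ch : V -> V -> nat) (v u : V) : V -> V -> nat :=
  fun a b => if (a == v) && (b == u) then (ch a b).-1 else ch a b.

Definition root_init : local := Local IDLE None (nbrs r) 0 MainLoop set0 None.

Inductive step : config -> config -> Prop :=
| step_root_init c : st (loc c r) = INIT ->
    step c (Config (upd_loc (loc c) r root_init) (chan c))
| step_root_explore c l' s : st (loc c r) = IDLE ->
    proceed (start_explore r (loc c r)) l' s ->
    step c (Config (upd_loc (loc c) r l') (send (chan c) r s))
| step_deliver c v u l' s : 0 < chan c v u -> handle u v (loc c u) l' s ->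
    step c (Config (upd_loc (loc c) u l') (send (consume (chan c) v u) u s)).

Inductive reachable : config -> Prop :=
| reach_init : reachable init_config
| reach_step c c' : reachable c -> step c c' -> reachable c'.

(* the root has completed exactly k invocations of Explore and is not inside one *)
Definition root_finished (c : config) (k : nat) : Prop :=
  (st (loc c r) = IDLE \/ st (loc c r) = DONE) /\ cnt (loc c r) = k.

Definition walk_len (u v : V) (k : nat) : Prop :=
  exists p : seq V, [/\ path e u p, last u p = v & size p = k].
Definition dist_is (u v : V) (k : nat) : Prop :=
  walk_len u v k /\ forall j, walk_len u v j -> k <= j.

End Algo.

From HB Require Import structures.
From mathcomp Require Import all_boot zify.
Set Implicit Arguments. Unset Strict Implicit. Unset Printing Implicit Defensive.

(* Exactly one message is ever in transit, so the execution is sequential.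
   The root's K-th Explore is a depth-first traversal of the BFS tree built so
   far, and the Explore count of a node tells whether the current traversal has
   already passed it.  Each visited node of depth K - 1 probes all its neighbours
   other than its parent, which wakes up the nodes of depth K (they take the
   prober as parent) and sends nothing deeper.
   Formally, every reachable configuration is either initial, between two rounds,
   inside round K, or inside the final round; inside round K the exploring nodes
   form a stack along a tree path from the root, one per depth, and the message
   travels between the top of that stack and one of its neighbours. *)

Section BFS.
Variables (V : finType) (e : rel V) (r : V).
Hypotheses (e_sym : symmetric e) (e_irr : irreflexive e)
  (e_conn : forall u v : V, connect e u v).

Local Notation n := (nnodes V).

(** * Depth in the BFS tree *)

Fixpoint walk_ends (j : nat) : {set V} :=
  if j is j'.+1 then [set v | [exists u in walk_ends j', e u v]] else [set r].

Lemma walk_len_ends j v : walk_len e r v j <-> v \in walk_ends j.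
Proof.
elim: j v => [|j IH] v /=.
  split; first by case=> p [_ <-]; case: p => // _; rewrite in_set1.
  by rewrite in_set1 => /eqP ->; exists [::].
split.
  case=> p [pp lp sp]; case/lastP: p pp lp sp => [//|q x].
  rewrite rcons_path last_rcons size_rcons => /andP[pq ex] <- [sq].
  rewrite in_set; apply/existsP; exists (last r q); rewrite ex andbT.
  by apply/IH; exists q.
rewrite in_set => /existsP[u /andP[/IH[q [pq lq sq]] euv]].
by exists (rcons q v); rewrite rcons_path last_rcons size_rcons pq lq euv sq.
Qed.

Lemma walk_ends_exists v : exists j, v \in walk_ends j.
Proof.
have /connectP[p pp lp] := e_conn r v.
by exists (size p); apply/walk_len_ends; exists p.
Qed.

Definition depth (v : V) : nat := ex_minn (walk_ends_exists v).

Lemma depth_walk v : v \in walk_ends (depth v).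
Proof. by rewrite /depth; case: ex_minnP. Qed.

Lemma depth_min v j : v \in walk_ends j -> depth v <= j.
Proof. by rewrite /depth; case: ex_minnP => m _ H /H. Qed.

Lemma dist_isE v j : dist_is e r v j <-> depth v = j.
Proof.
split.
  case=> /walk_len_ends vj minj; apply/eqP; rewrite eqn_leq depth_min //=.
  by apply/minj/walk_len_ends/depth_walk.
move=> <-; split; first exact/walk_len_ends/depth_walk.
by move=> i /walk_len_ends /depth_min.
Qed.

Lemma depth_edge u v : e u v -> depth v <= (depth u).+1.
Proof.
move=> euv; apply: depth_min; rewrite /= in_set; apply/existsP; exists u.
by rewrite depth_walk.
Qed.

Lemma depth_edge_rev u v : e u v -> depth u <= (depth v).+1.
Proof. by rewrite e_sym; apply: depth_edge. Qed.

Lemma depth_root : depth r = 0.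
Proof. by apply/eqP; rewrite -leqn0 depth_min //= in_set1. Qed.

Lemma depth_eq0 v : (depth v == 0) = (v == r).
Proof.
apply/eqP/eqP=> [dv0|->]; last exact: depth_root.
by have := depth_walk v; rewrite dv0 /= in_set1 => /eqP.
Qed.

Lemma depth_gt0 v : v != r -> 0 < depth v.
Proof. by rewrite lt0n depth_eq0. Qed.

Lemma depth_pred v : v != r -> exists p, e p v /\ (depth p).+1 = depth v.
Proof.
move=> vr; have := depth_walk v; case dv: (depth v) => [|j].
  by move/eqP: dv; rewrite depth_eq0 (negPf vr).
rewrite /= in_set => /existsP[p /andP[pj epv]]; exists p; split=> //.
by apply/eqP; rewrite eqn_leq ltnS depth_min //= -dv depth_edge.
Qed.

(* A shortest walk is a path, so it visits at most #|V| vertices. *)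
Lemma depth_lt_card v : depth v < #|V|.
Proof.
have /walk_len_ends[p [pp lp _]] := depth_walk v.
move: lp; case: (shortenP pp) => p' pp' up' _ lp'.
have dp' : depth v <= size p' by apply: depth_min; apply/walk_len_ends; exists p'.
apply: (leq_ltn_trans dp'); have := max_card (mem (r :: p')).
by rewrite (card_uniqP up').
Qed.

Lemma depth_le_n1 v : depth v <= n - 1.
Proof. by have := depth_lt_card v; rewrite /nnodes; lia. Qed.

Lemma root_of_n1 v : n = 1 -> v = r.
Proof.
move=> n1; apply/eqP; rewrite -depth_eq0.
by have := depth_lt_card v; rewrite -/(nnodes V) n1; lia.
Qed.

Lemma n1_of_isolated_root : nbrs e r = set0 -> n = 1.
Proof.
move=> nr0; suff all_r v : v = r.
  by rewrite /nnodes (@eq_card1 _ r) // => y; rewrite !inE (all_r y) eqxx.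
apply/eqP/negPn/negP => vr; have /connectP[[|u p] /= pp lp] := e_conn r v.
  by rewrite lp eqxx in vr.
have : u \in nbrs e r by rewrite in_set; case/andP: pp.
by rewrite nr0 in_set0.
Qed.

(** * Shape of the configurations *)

Definition awake (c : config V) v := st (loc c v) <> INIT.

Definition tree_parent (c : config V) v :=
  exists p, [/\ par (loc c v) = Some p, e v p, (depth p).+1 = depth v & awake c p].

(* In round K a node of depth d < K makes its (K - d)-th Explore; [visited K]
   holds once it has started it.  Nodes of depth K are woken with count 0. *)
Definition unvisited K (c : config V) v := cnt (loc c v) + depth v + 1 = K.
Definition visited K (c : config V) v := cnt (loc c v) + depth v = K.

Definition Inv_start (c : config V) :=
  (forall v, st (loc c v) = INIT) /\ (forall a b, chan c a b = 0).

Definition Inv_idle (c : config V) :=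
  [/\ st (loc c r) = IDLE, par (loc c r) = None,
      (cnt (loc c r) < n - 1 \/ n = 1), (forall a b, chan c a b = 0) &
      (forall v, awake c v <-> depth v <= cnt (loc c r)) /\
      (forall v, v != r -> awake c v ->
        [/\ tree_parent c v, st (loc c v) = IDLE & visited (cnt (loc c r)) c v])].

Definition Inv_last (c : config V) :=
  [/\ cnt (loc c r) = n - 1,
      (st (loc c r) = DONE \/ (st (loc c r) = EXPLORE /\ ph (loc c r) = DummyLoop)),
      (forall v, awake c v) & (forall v, v != r -> tree_parent c v)].

Definition explorer_ok K (c : config V) x :=
  [/\ depth x < K, (x != r -> visited K c x),
      todo (loc c x) \subset nbrs e x :\: parset (par (loc c x)) &
      exists w, [/\ wait (loc c x) = Some w, e x w, w \notin todo (loc c x),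
        (forall u, awake c u -> par (loc c u) = Some x -> u \in todo (loc c x) ->
           unvisited K c u) &
        (forall u, awake c u -> par (loc c u) = Some x -> u \notin todo (loc c x) ->
           u != w -> st (loc c u) = IDLE /\ visited K c u) /\
        (forall u, e x u -> u \notin todo (loc c x) -> u != w -> awake c u)]].

(* The unique message in transit goes from the deepest explorer t to w
   ([req] = true) or comes back from w to t ([req] = false). *)
Definition token K (c : config V) t w (req : bool) :=
  [/\ st (loc c t) = EXPLORE, wait (loc c t) = Some w, st (loc c w) <> EXPLORE,
      (forall a a', chan c a a' = if req then nat_of_bool ((a == t) && (a' == w))
                                  else nat_of_bool ((a == w) && (a' == t))) &
      [/\ (forall y, st (loc c y) = EXPLORE -> depth y <= depth t),
      (forall x, st (loc c x) = EXPLORE -> x != t ->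
        exists w', [/\ wait (loc c x) = Some w', st (loc c w') = EXPLORE &
                       par (loc c w') = Some x]) &
      (if req then (awake c w -> par (loc c w) = Some t -> unvisited K c w)
      else (awake c w /\ (par (loc c w) = Some t -> st (loc c w) = IDLE /\ visited K c w)))]].

Record root_in_round K (c : config V) : Prop := {
  rr_state : st (loc c r) = EXPLORE;
  rr_phase : ph (loc c r) = MainLoop;
  rr_par : par (loc c r) = None;
  rr_cnt : cnt (loc c r) = K;
  rr_pos : 0 < K;
  rr_bound : K <= n - 1 \/ n = 1 }.

Record Inv_round K (c : config V) : Prop := {
  rnd_root : root_in_round K c;
  rnd_low : forall v, depth v < K -> awake c v;
  rnd_high : forall v, K < depth v -> st (loc c v) = INIT;
  rnd_tree : forall v, v != r -> awake c v ->
     [/\ tree_parent c v, st (loc c v) = IDLE \/ st (loc c v) = EXPLORE &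
         unvisited K c v \/ visited K c v];
  rnd_explorer : forall x, st (loc c x) = EXPLORE -> explorer_ok K c x;
  rnd_stack : forall x, x != r -> st (loc c x) = EXPLORE ->
     exists p, [/\ par (loc c x) = Some p, st (loc c p) = EXPLORE & wait (loc c p) = Some x];
  rnd_depth_inj : forall x y, st (loc c x) = EXPLORE -> st (loc c y) = EXPLORE ->
     depth x = depth y -> x = y;
  rnd_unvisited_child : forall v p, v != r -> awake c v -> par (loc c v) = Some p ->
     p != r -> unvisited K c p -> unvisited K c v;
  rnd_subtree_done : forall v, v != r -> st (loc c v) = IDLE -> visited K c v -> depth v < K ->
     (forall u, e v u -> awake c u) /\
     (forall u, awake c u -> par (loc c u) = Some v -> st (loc c u) = IDLE /\ visited K c u);
  rnd_token : exists t w b, token K c t w b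
}.

Definition Inv c := Inv_start c \/ Inv_idle c \/ (exists K, Inv_round K c) \/ Inv_last c.

Lemma upd_loc_eq (f : V -> local V) u l : upd_loc f u l u = l.
Proof. by rewrite /upd_loc eqxx. Qed.

Lemma upd_loc_ne (f : V -> local V) u l x : x != u -> upd_loc f u l x = f x.
Proof. by rewrite /upd_loc => /negPf ->. Qed.

Lemma not_awake c v : ~ awake c v -> st (loc c v) = INIT.
Proof. by rewrite /awake; case: (st _) => // na; case: na. Qed.

Lemma awake_or_init c v : awake c v \/ st (loc c v) = INIT.
Proof. by rewrite /awake; case: (st _); [right|left..]. Qed.

Lemma nnodes_gt0 : 0 < n.
Proof. by apply/card_gt0P; exists r. Qed.

Lemma tree_parent_mono (c c' : config V) v :
  (forall x, awake c x -> awake c' x) -> par (loc c' v) = par (loc c v) ->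
  tree_parent c v -> tree_parent c' v.
Proof. by move=> aw pv [p [pp ep dp ap]]; exists p; rewrite pv; split=> //; apply: aw. Qed.

Lemma root_in_round_upd K c u l ch : root_in_round K c -> u != r ->
  root_in_round K (Config (upd_loc (loc c) u l) ch).
Proof. by case=> *; split; rewrite /= ?upd_loc_ne // eq_sym. Qed.

Lemma proceed_keeps (l l' : local V) s : proceed l l' s ->
  [/\ cnt l' = cnt l, par l' = par l & st l' <> INIT].
Proof.
elim=> {l l' s} [l w|l l' s _ _ _ _ _ _ [-> -> ?]|l] //=.
by split=> //; case: ifP.
Qed.

Lemma proceed_not_last (l l' : local V) s : proceed l l' s -> cnt l <> n - 1 ->
  (exists w, [/\ w \in todo l,
     l' = Local EXPLORE (par l) (chl l) (cnt l) (ph l) (todo l :\ w) (Some w) & s = Some w])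
  \/ [/\ todo l = set0, l' = Local IDLE (par l) (chl l) (cnt l) (ph l) set0 None & s = par l].
Proof.
case=> {l l' s} [l w _ _ wt _|l l' s _ _ _ _ cn _ /(_ cn)//|l _ _ t0 _ /eqP/negPf cn].
  by left; exists w.
by right; rewrite cn.
Qed.

Lemma proceed_dummy (l l' : local V) s : proceed l l' s -> ph l = DummyLoop ->
  cnt l = n - 1 -> cnt l' = cnt l /\ (st l' = DONE \/ (st l' = EXPLORE /\ ph l' = DummyLoop)).
Proof.
case=> {l l' s} [l w _ _ _ /= -> _|l l' s _ _ -> //|l _ _ _ _ _ /= ->].
- by split=> //; right.
- by rewrite eqxx; split=> //; left.
Qed.

Lemma proceed_last (l l' : local V) s : proceed l l' s -> ph l = MainLoop ->
  cnt l = n - 1 ->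
  (exists w, [/\ w \in todo l,
     l' = Local EXPLORE (par l) (chl l) (cnt l) (ph l) (todo l :\ w) (Some w) & s = Some w])
  \/ [/\ todo l = set0, cnt l' = cnt l &
        (st l' = DONE \/ (st l' = EXPLORE /\ ph l' = DummyLoop))].
Proof.
case=> {l l' s} [l w _ _ wt _ _|l l' s _ _ _ t0 _ pr _ cn|l _ _ _ [-> //|ncn _ /ncn//]].
  by left; exists w.
by right; have [] := proceed_dummy pr erefl cn.
Qed.

Lemma handle_awake u v (l l' : local V) s : handle e u v l l' s -> st l <> INIT ->
  st l' <> INIT /\ par l' = par l.
Proof.
case=> {l l' s} [l -> //|l|l l' s|l l' s|l] //=;
  by move=> _ _ /proceed_keeps[_ -> ?].
Qed.

Lemma handle_last u v (l l' : local V) s : handle e u v l l' s -> cnt l = n - 1 ->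
  (st l = DONE \/ (st l = EXPLORE /\ ph l = DummyLoop)) ->
  cnt l' = n - 1 /\ (st l' = DONE \/ (st l' = EXPLORE /\ ph l' = DummyLoop)).
Proof.
case=> {l l' s}.
- by move=> l -> _ [|[]].
- by move=> l [->|->] _ cn [|[]] //; split=> //; left.
- by move=> l l' s -> _ _ _ [|[]].
- move=> l l' s -> _ pr cn [//|[_ ph1]].
  by have [-> ?] := proceed_dummy pr ph1 cn.
- by [].
Qed.

(** * Outside the rounds *)

Lemma Inv_start_init : Inv_start (init_config V).
Proof. by []. Qed.

Lemma Inv_start_step c c' : Inv_start c -> step e r c c' -> Inv c'.
Proof.
move=> I0 S; case: S I0 => {c c'} [c _ [init0 ch0]|c l' s rst _ [init0 _]|c v u l' s ch _ [_ ch0]].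
- right; left; split; rewrite /= ?upd_loc_eq /root_init //.
    by have := nnodes_gt0; rewrite /=; lia.
  split=> v; rewrite /awake /=; case: (eqVneq v r) => [->|vr].
  + by rewrite upd_loc_eq depth_root.
  + rewrite upd_loc_ne // init0 leqn0 depth_eq0 (negPf vr); split=> // /(_ erefl).
  + by rewrite upd_loc_eq.
  + by rewrite upd_loc_ne // init0.
- by rewrite init0 in rst.
- by rewrite ch0 in ch.
Qed.

Lemma Inv_last_step c c' : Inv_last c -> step e r c c' -> Inv c'.
Proof.
move=> I3 S; case: S I3 => {c c'}.
- by move=> c rst [_ [|[]]]; rewrite rst.
- by move=> c l' s rst _ [_ [|[]]]; rewrite rst.
move=> c v u l' s _ hd [rcnt rlast allaw tree].
have [u_aw u_par] := handle_awake hd (allaw u).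
have loc_ne x : x != u -> upd_loc (loc c) u l' x = loc c x by apply: upd_loc_ne.
have r_last : cnt (upd_loc (loc c) u l' r) = n - 1 /\
  (st (upd_loc (loc c) u l' r) = DONE \/
   (st (upd_loc (loc c) u l' r) = EXPLORE /\ ph (upd_loc (loc c) u l' r) = DummyLoop)).
  case: (eqVneq r u) => [ru|ru]; last by rewrite loc_ne.
  by move: hd; rewrite -ru upd_loc_eq => /handle_last; apply.
have aw' x : awake (Config (upd_loc (loc c) u l') (send (consume (chan c) v u) u s)) x.
  rewrite /awake /=; case: (eqVneq x u) => [->|xu]; rewrite ?upd_loc_eq ?loc_ne //.
  exact: allaw.
right; right; right; case: r_last => r_cnt r_st; split=> // x xr.
apply: (tree_parent_mono (c := c)) => //; last exact: tree.
by rewrite /=; case: (eqVneq x u) => [->|xu]; rewrite ?upd_loc_eq ?loc_ne.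
Qed.

Lemma Inv_idle_no_explorer c x : Inv_idle c -> st (loc c x) <> EXPLORE.
Proof.
case=> rst _ _ _ [_ tree]; case: (eqVneq x r) => [->|xr]; first by rewrite rst.
by case: (awake_or_init c x) => [/(tree x xr)[_ ->]|->].
Qed.

Section RoundStart.
Variables (c : config V) (l' : local V) (w : V).
Hypotheses (I : Inv_idle c) (l'_st : st l' = EXPLORE) (l'_par : par l' = None)
  (l'_cnt : cnt l' = (cnt (loc c r)).+1) (l'_ph : ph l' = MainLoop)
  (l'_todo : todo l' = nbrs e r :\ w) (l'_wait : wait l' = Some w) (w_nbr : w \in nbrs e r).

Local Notation K := (cnt (loc c r)).
Local Notation c' := (Config (upd_loc (loc c) r l') (send (chan c) r (Some w))).

Let start_loc_ne x : x != r -> loc c' x = loc c x.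
Proof. by move=> xr; rewrite /= upd_loc_ne. Qed.

Let start_awake x : awake c' x <-> awake c x.
Proof.
case: (eqVneq x r) => [->|xr]; last by rewrite /awake start_loc_ne.
by case: I => rst _ _ _ _; rewrite /awake /= upd_loc_eq l'_st rst.
Qed.

Let start_explorer x : st (loc c' x) = EXPLORE -> x = r.
Proof.
case: (eqVneq x r) => [//|xr]; rewrite start_loc_ne // => xe.
by case: (Inv_idle_no_explorer I xe).
Qed.

Let start_unvisited x : x != r -> awake c' x -> unvisited K.+1 c' x.
Proof.
move=> xr /start_awake xa; case: I => _ _ _ _ [_ /(_ x xr xa)[_ _]].
by rewrite /unvisited /visited start_loc_ne // => <-; lia.
Qed.

Let start_child u : u != r -> awake c' u -> par (loc c' u) = Some r -> u \in nbrs e r.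
Proof.
move=> ur /start_awake ua; case: I => _ _ _ _ [_ /(_ u ur ua)[[p [pu ep _ _]] _ _]].
by rewrite start_loc_ne // pu => -[<-]; rewrite in_set e_sym.
Qed.

Lemma Inv_round_start : Inv_round K.+1 c'.
Proof.
have [_ _ Kn ch0 [awK tree]] := I.
have erw : e r w by move: w_nbr; rewrite in_set.
have wr : w != r by apply: contraTneq erw => ->; rewrite e_irr.
have loc_r : loc c' r = l' by rewrite /= upd_loc_eq.
split.
- by split; rewrite ?loc_r //; move: Kn; lia.
- move=> v dv; apply/start_awake/awK; lia.
- move=> v dv; have vr : v != r by apply: contraTneq dv => ->; rewrite depth_root.
  by rewrite start_loc_ne //; apply: not_awake => /awK; lia.
- move=> v vr /[dup] /start_awake va /start_unvisited-/(_ vr) vu.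
  have [vtree vst _] := tree v vr va.
  split; [|by left; rewrite start_loc_ne|by left].
  by apply: tree_parent_mono vtree => [x /start_awake|]; rewrite ?start_loc_ne.
- move=> x /start_explorer ->; split; rewrite ?depth_root ?eqxx //.
    by rewrite loc_r l'_todo l'_par setD0 subD1set.
  exists w; rewrite loc_r l'_todo l'_wait setD11; split=> //.
    move=> u ua; case: (eqVneq u r) => [->|ur _ _]; first by rewrite loc_r l'_par.
    exact: start_unvisited.
  split=> u.
    move=> ua; case: (eqVneq u r) => [->|ur]; first by rewrite loc_r l'_par.
    by move=> /(start_child ur ua) un; rewrite in_setD1 un andbT => /negbNE ->.
  by move=> eru; rewrite in_setD1 in_set eru andbT => /negbNE ->.
- by move=> x xr /start_explorer xr'; rewrite xr' eqxx in xr.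
- by move=> x y /start_explorer -> /start_explorer ->.
- by move=> v p vr va _ _ _; apply: start_unvisited.
- move=> v vr vi vv _; have va : awake c' v by rewrite /awake vi.
  by have := start_unvisited vr va; move: vv; rewrite /unvisited /visited; lia.
exists r, w, true; split; rewrite ?loc_r //.
- by rewrite start_loc_ne //; apply: Inv_idle_no_explorer.
- by move=> a a'; rewrite /= /send ch0; case: ifP.
split=> [y /start_explorer ->|x /start_explorer ->|]; rewrite ?eqxx //.
by move=> wa _; apply: start_unvisited.
Qed.

End RoundStart.

Lemma Inv_idle_step c c' : Inv_idle c -> step e r c c' -> Inv c'.
Proof.
move=> I S; case: S I => {c c'} [c rinit [rst _]|c l' s _ pr I|c v u l' s ch _ [_ _ _ ch0 _]].
- by rewrite rst in rinit.
- have rpar : par (loc c r) = None by case: I.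
  move: pr; rewrite /start_explore rpar /= setD0.
  set l0 := Local _ _ _ _ _ _ _.
  have start w : w \in nbrs e r ->
      Inv (Config (upd_loc (loc c) r (Local EXPLORE None (chl (loc c r)) (cnt (loc c r)).+1
                                            MainLoop (nbrs e r :\ w) (Some w)))
                  (send (chan c) r (Some w))).
    by move=> wn; right; right; left; exists (cnt (loc c r)).+1; apply: Inv_round_start.
  have [Klast|Knot] := eqVneq (cnt l0) (n - 1) => pr.
    case: (proceed_last pr erefl Klast) => /= [[w [wn -> ->]]|[/n1_of_isolated_root n1 _ _]].
      exact: start.
    by move: Klast; rewrite n1.
  case: (proceed_not_last pr (elimN eqP Knot)) => /= [[w [wn -> ->]]|[t0 -> ->]].
    exact: start.
  have n1 := n1_of_isolated_root t0; have all_r v := root_of_n1 v n1.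
  right; left; split; rewrite /= ?upd_loc_eq //; [by right|by case: I|].
  split=> v; rewrite (all_r v) ?eqxx // depth_root /awake /= upd_loc_eq.
  by split.
- by rewrite ch0 in ch.
Qed.

(** * During a round *)

Section RoundFacts.
Variables (K : nat) (c : config V).
Hypothesis H : Inv_round K c.

Lemma rnd_par_edge v p : awake c v -> par (loc c v) = Some p ->
  [/\ v != r, e v p, (depth p).+1 = depth v & awake c p].
Proof.
move=> va vp; have vr : v != r.
  by apply/eqP => vr; move: vp; rewrite vr (rr_par (rnd_root H)).
have [[q [qp eq dq qa]] _ _] := rnd_tree H vr va.
by move: qp; rewrite vp => -[->].
Qed.

Lemma rnd_par_not_mutual x y : awake c y -> par (loc c y) = Some x ->
  par (loc c x) <> Some y.
Proof.
move=> ya yx xy; have [_ _ dxy xa] := rnd_par_edge ya yx.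
by have [_ _ dyx _] := rnd_par_edge xa xy; lia.
Qed.

Lemma token_facts t w b : token K c t w b ->
  [/\ w != r, e t w, t != w, w \notin todo (loc c t) & depth t < K].
Proof.
case=> te tw wne _ _.
have wr : w != r by apply/eqP => wr; apply: wne; rewrite wr (rr_state (rnd_root H)).
have tw' : t != w by apply/eqP => tw'; apply: wne; rewrite -tw'.
have [dt _ _ [w0 [tw0 etw wt _ _]]] := rnd_explorer H te.
by move: tw0 etw wt; rewrite tw => -[<-].
Qed.

End RoundFacts.

Lemma token_consume K c t w b : token K c t w b ->
  forall a a', consume (chan c) (if b then t else w) (if b then w else t) a a' = 0.
Proof.
case=> _ _ _ ch _ a a'; rewrite /consume !ch.
by case: b {ch}; case: ifP => //= ->.
Qed.

Lemma token_pass K c t w b u x : token K c t w b -> forall a a',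
  send (consume (chan c) (if b then t else w) (if b then w else t)) u (Some x) a a'
  = (a == u) && (a' == x).
Proof. by move=> T a a'; rewrite /send /= (token_consume T); case: (_ && _). Qed.

Lemma visited_unvisited K c v : visited K c v -> unvisited K c v -> False.
Proof. rewrite /visited /unvisited; lia. Qed.

(* w answers t at once and becomes an idle visited leaf: it was either just woken,
   or it is a child of t without other neighbours. *)
Section LeafReply.
Variables (K : nat) (c : config V) (t w : V) (l' : local V).
Hypotheses (H : Inv_round K c) (T : token K c t w true)
  (l'_st : st l' = IDLE) (l'_par : par l' = Some t)
  (w_depth : (depth t).+1 = depth w) (l'_visited : cnt l' + depth w = K)
  (w_leaf : forall v, awake c v -> par (loc c v) <> Some w)
  (w_nbrs : depth w < K -> forall u, e w u -> awake c u).

Local Notation c' := (Config (upd_loc (loc c) w l') (send (consume (chan c) t w) w (Some t))).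

Let wr : w != r. Proof. by case: (token_facts H T). Qed.
Let tw : t != w. Proof. by case: (token_facts H T). Qed.
Let wt : w \notin todo (loc c t). Proof. by case: (token_facts H T). Qed.
Let te : st (loc c t) = EXPLORE. Proof. by case: T. Qed.
Let t_wait : wait (loc c t) = Some w. Proof. by case: T. Qed.

Let loc_w : loc c' w = l'. Proof. by rewrite /= upd_loc_eq. Qed.
Let loc_ne x : x != w -> loc c' x = loc c x. Proof. by move=> xw; rewrite /= upd_loc_ne. Qed.
Let awake_w : awake c' w. Proof. by rewrite /awake loc_w l'_st. Qed.

Let awake_ne x : x != w -> awake c' x <-> awake c x.
Proof. by move=> xw; rewrite /awake loc_ne. Qed.

Let awake_up x : awake c x -> awake c' x.
Proof. by case: (eqVneq x w) => [->|/awake_ne ->]. Qed.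

Let visited_ne x : x != w -> visited K c' x = visited K c x.
Proof. by move=> xw; rewrite /visited loc_ne. Qed.

Let unvisited_ne x : x != w -> unvisited K c' x = unvisited K c x.
Proof. by move=> xw; rewrite /unvisited loc_ne. Qed.

Let explorer_ne x : st (loc c' x) = EXPLORE -> x != w /\ st (loc c x) = EXPLORE.
Proof.
by case: (eqVneq x w) => [->|xw]; rewrite ?loc_w ?l'_st // loc_ne.
Qed.

Let leaf_tree v : v != r -> awake c' v ->
  [/\ tree_parent c' v, st (loc c' v) = IDLE \/ st (loc c' v) = EXPLORE &
      unvisited K c' v \/ visited K c' v].
Proof.
move=> vr; case: (eqVneq v w) => [->|vw /(awake_ne vw) va] .
  split; [|by left; rewrite loc_w|by right; rewrite /visited loc_w].
  by exists t; rewrite loc_w l'_par e_sym; split=> //; [case: (token_facts H T)|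
     apply: awake_up; rewrite /awake te].
have [vtree vst vvis] := rnd_tree H vr va.
split; first by apply: tree_parent_mono vtree; rewrite ?loc_ne.
  by rewrite loc_ne.
by rewrite unvisited_ne // visited_ne.
Qed.

Let leaf_explorer x : st (loc c' x) = EXPLORE -> explorer_ok K c' x.
Proof.
move=> /explorer_ne [xw xe].
have [dx xvis xsub [w0 [xw0 ew0 w0t kids_todo [kids_done nbrs_aw]]]] := rnd_explorer H xe.
split=> //; [by rewrite visited_ne|by rewrite loc_ne|].
exists w0; rewrite !loc_ne //; split=> //.
  move=> u ua; case: (eqVneq u w) => [->|uw].
    by rewrite loc_w l'_par => -[<-]; rewrite (negPf wt).
  by rewrite loc_ne // unvisited_ne //; apply: kids_todo; apply/(awake_ne uw).
split=> u.
  move=> ua; case: (eqVneq u w) => [->|uw].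
    by rewrite loc_w l'_par => -[xt] _; move: xw0; rewrite -xt t_wait => -[->]; rewrite eqxx.
  by rewrite loc_ne // visited_ne //; apply: kids_done; apply/(awake_ne uw).
by move=> exu ut uw0; apply: awake_up; apply: nbrs_aw.
Qed.

Let leaf_unvisited_child v p : v != r -> awake c' v -> par (loc c' v) = Some p ->
  p != r -> unvisited K c' p -> unvisited K c' v.
Proof.
move=> vr; case: (eqVneq v w) => [->|vw /(awake_ne vw) va].
  rewrite loc_w l'_par => _ -[<-] tr; rewrite unvisited_ne //.
  by have [_ /(_ tr) tvis _ _] := rnd_explorer H te; move/(visited_unvisited tvis).
rewrite loc_ne // => vp pr; have pw : p != w by apply: contra_not_neq (w_leaf va) => <-.
by rewrite !unvisited_ne //; apply: (rnd_unvisited_child H vr va vp pr).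
Qed.

Let leaf_subtree_done v : v != r -> st (loc c' v) = IDLE -> visited K c' v -> depth v < K ->
  (forall u, e v u -> awake c' u) /\
  (forall u, awake c' u -> par (loc c' u) = Some v -> st (loc c' u) = IDLE /\ visited K c' u).
Proof.
move=> vr; case: (eqVneq v w) => [->|vw].
  move=> _ _ dwK; split; first by move=> u /(w_nbrs dwK) /awake_up.
  move=> u ua; case: (eqVneq u w) => [->|uw].
    by rewrite loc_w l'_par => -[/eqP]; rewrite (negPf tw).
  by rewrite loc_ne // => /(w_leaf (proj1 (awake_ne uw) ua)).
rewrite loc_ne // visited_ne // => vi vv dv.
have [nbrs_aw kids] := rnd_subtree_done H vr vi vv dv; split; first by move=> u /nbrs_aw /awake_up.
move=> u ua; case: (eqVneq u w) => [->|uw].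
  by rewrite loc_w l'_par => -[vt]; move: vi; rewrite -vt te.
by rewrite loc_ne // visited_ne // => up; apply: kids => //; apply/(awake_ne uw).
Qed.

Lemma Inv_round_leaf_reply : Inv_round K c'.
Proof.
have [_ _ wne _ [t_deepest stack_above _]] := T.
have dwK : depth w <= K by lia.
split.
- exact: root_in_round_upd (rnd_root H) wr.
- by move=> v /(rnd_low H) /awake_up.
- move=> v dv; have vw : v != w by apply: contraTneq dv => ->; rewrite -leqNgt.
  by rewrite loc_ne // (rnd_high H).
- exact: leaf_tree.
- exact: leaf_explorer.
- move=> x xr /explorer_ne [xw xe]; have [p [xp pe pw]] := rnd_stack H xr xe.
  have pw' : p != w by apply/eqP => pw'; apply: wne; rewrite -pw'.
  by exists p; rewrite !loc_ne.
- by move=> x y /explorer_ne [_ xe] /explorer_ne [_ ye]; apply: (rnd_depth_inj H).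
- exact: leaf_unvisited_child.
- exact: leaf_subtree_done.
exists t, w, false; split; [by rewrite loc_ne..|by rewrite loc_w l'_st| |split].
- by move=> a a'; apply: (token_pass w t T).
- by move=> y /explorer_ne [_ /t_deepest].
- move=> x /explorer_ne [xw xe] xt; have [w' [xw' w'e w'p]] := stack_above x xe xt.
  have w'w : w' != w by apply/eqP => w'w; apply: wne; rewrite -w'w.
  by exists w'; rewrite !loc_ne.
- by rewrite loc_w l'_par; split=> [|_]; [exact: awake_w|rewrite /visited loc_w].
Qed.

End LeafReply.

Definition same_status (c c' : config V) :=
  forall x, [/\ st (loc c' x) = st (loc c x), par (loc c' x) = par (loc c x) &
                cnt (loc c' x) = cnt (loc c x)].

Section SameStatus.
Variables (K : nat) (c c' : config V).
Hypotheses (H : Inv_round K c) (E : same_status c c').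

Let Est x : st (loc c' x) = st (loc c x). Proof. by case: (E x). Qed.
Let Epar x : par (loc c' x) = par (loc c x). Proof. by case: (E x). Qed.
Let Eaw x : awake c' x <-> awake c x. Proof. by rewrite /awake Est. Qed.
Let Eunv x : unvisited K c' x = unvisited K c x.
Proof. by case: (E x) => _ _ cx; rewrite /unvisited cx. Qed.
Let Evis x : visited K c' x = visited K c x.
Proof. by case: (E x) => _ _ cx; rewrite /visited cx. Qed.

Lemma Inv_round_same_status : ph (loc c' r) = ph (loc c r) ->
  (forall x, st (loc c' x) = EXPLORE -> explorer_ok K c' x) ->
  (forall x, x != r -> st (loc c' x) = EXPLORE ->
     exists p, [/\ par (loc c' x) = Some p, st (loc c' p) = EXPLORE & wait (loc c' p) = Some x]) ->
  (exists t w b, token K c' t w b) -> Inv_round K c'.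
Proof.
move=> ph_r expl stack tok.
have [[rst rph rpar rcnt Kpos Kn] low high tree _ _ dinj unv_child sub_done _] := H.
split=> //.
- by split; rewrite ?Est ?Epar ?ph_r //; case: (E r) => _ _ ->.
- by move=> v /low /Eaw.
- by move=> v /high; rewrite Est.
- move=> v vr /Eaw va; have [[p [vp ? ? /Eaw pa]] ? ?] := tree v vr va.
  by rewrite !Est Eunv Evis; split=> //; exists p; rewrite Epar.
- by move=> x y; rewrite !Est; apply: dinj.
- by move=> v p vr /Eaw va; rewrite Epar !Eunv; apply: unv_child.
- move=> v vr; rewrite Est Evis => vi vv dv; have [nbrs_aw kids] := sub_done v vr vi vv dv.
  split; first by move=> u /nbrs_aw /Eaw.
  by move=> u /Eaw ua; rewrite Epar Est Evis; apply: kids.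
Qed.

Lemma Inv_round_same_shape :
  (forall x, todo (loc c' x) = todo (loc c x) /\ wait (loc c' x) = wait (loc c x)) ->
  ph (loc c' r) = ph (loc c r) -> (exists t w b, token K c' t w b) -> Inv_round K c'.
Proof.
move=> Etw ph_r tok; apply: Inv_round_same_status; [exact: ph_r| | |exact: tok].
  move=> x; rewrite Est => /(rnd_explorer H).
  case=> ? xvis xsub [w0 [? ? ? kids_todo [kids_done nbrs_aw]]].
  case: (Etw x) => Etodo Ewait; split=> //; [by rewrite Evis|by rewrite Etodo Epar|].
  exists w0; rewrite Ewait Etodo; split=> //.
  + by move=> u /Eaw ua; rewrite Epar Eunv; apply: kids_todo.
  split; first by move=> u /Eaw ua; rewrite Epar Est Evis; apply: kids_done.
  by move=> u eu ut uw; apply/Eaw; apply: nbrs_aw.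
move=> x xr; rewrite Est => /(rnd_stack H xr) [p [? ? ?]].
by exists p; rewrite Epar Est; case: (Etw p) => _ ->.
Qed.

End SameStatus.

Lemma Inv_round_sibling_reply K c t w (l' : local V) : Inv_round K c -> token K c t w true ->
  st (loc c w) = IDLE -> par (loc c w) <> Some t ->
  st l' = st (loc c w) -> par l' = par (loc c w) -> cnt l' = cnt (loc c w) ->
  todo l' = todo (loc c w) -> wait l' = wait (loc c w) ->
  Inv_round K (Config (upd_loc (loc c) w l') (send (consume (chan c) t w) w (Some t))).
Proof.
move=> H T wi wpar Est Epar Ecnt Etodo Ewait.
have [wr _ tw _ _] := token_facts H T.
have [te t_wait wne _ [t_deepest stack_above _]] := T.
set c' := Config _ _.
have loc_ne x : x != w -> loc c' x = loc c x by move=> xw; rewrite /= upd_loc_ne.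
have E : same_status c c'.
  by move=> x; case: (eqVneq x w) => [->|/loc_ne ->]; rewrite /= ?upd_loc_eq.
have Est' x : st (loc c' x) = st (loc c x) by case: (E x).
apply: (Inv_round_same_shape H E).
- by move=> x; case: (eqVneq x w) => [->|/loc_ne ->]; rewrite /= ?upd_loc_eq.
- by rewrite loc_ne // eq_sym.
exists t, w, false; split; [by rewrite Est'|by rewrite loc_ne|by rewrite Est'| |split].
- by move=> a a'; apply: (token_pass w t T).
- by move=> y; rewrite Est' => /t_deepest.
- move=> x; rewrite Est' => xe xt; have [w' [? ? ?]] := stack_above x xe xt.
  have xw : x != w by apply/eqP => xw; move: xe; rewrite xw wi.
  by exists w'; case: (E w') => -> -> _; rewrite loc_ne.
- by rewrite /awake Est' wi; split=> //; case: (E w) => _ ->.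
Qed.

Section Descend.
Variables (K : nat) (c : config V) (t w w2 : V) (l' : local V).
Hypotheses (H : Inv_round K c) (T : token K c t w true)
  (w_idle : st (loc c w) = IDLE) (w_par : par (loc c w) = Some t)
  (l'_st : st l' = EXPLORE) (l'_par : par l' = Some t) (l'_cnt : cnt l' = (cnt (loc c w)).+1)
  (l'_todo : todo l' = (nbrs e w :\: [set t]) :\ w2) (l'_wait : wait l' = Some w2)
  (w2_nbr : w2 \in nbrs e w :\: [set t]).

Local Notation c' := (Config (upd_loc (loc c) w l') (send (consume (chan c) t w) w (Some w2))).

Let wr : w != r. Proof. by case: (token_facts H T). Qed.
Let tw : t != w. Proof. by case: (token_facts H T). Qed.
Let te : st (loc c t) = EXPLORE. Proof. by case: T. Qed.
Let wa : awake c w. Proof. by rewrite /awake w_idle. Qed.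
Let w_unvisited : unvisited K c w. Proof. by case: T => _ _ _ _ [_ _ /(_ wa w_par)]. Qed.
Let w_depth : (depth t).+1 = depth w. Proof. by case: (rnd_par_edge H wa w_par). Qed.
Let ew2 : e w w2. Proof. by move: w2_nbr; rewrite in_setD in_set => /andP[]. Qed.
Let w2t : w2 != t. Proof. by move: w2_nbr; rewrite in_setD in_set1 => /andP[]. Qed.
Let w2w : w2 != w. Proof. by apply: contraTneq ew2 => ->; rewrite e_irr. Qed.

Let loc_w : loc c' w = l'. Proof. by rewrite /= upd_loc_eq. Qed.
Let loc_ne x : x != w -> loc c' x = loc c x. Proof. by move=> xw; rewrite /= upd_loc_ne. Qed.

Let awakeE x : awake c' x <-> awake c x.
Proof.
by case: (eqVneq x w) => [->|xw]; rewrite /awake ?loc_w ?l'_st ?w_idle ?loc_ne.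
Qed.

Let visited_ne x : x != w -> visited K c' x = visited K c x.
Proof. by move=> xw; rewrite /visited loc_ne. Qed.

Let unvisited_ne x : x != w -> unvisited K c' x = unvisited K c x.
Proof. by move=> xw; rewrite /unvisited loc_ne. Qed.

Let w_visited : visited K c' w.
Proof. by move: w_unvisited; rewrite /visited /unvisited loc_w l'_cnt; lia. Qed.

Let explorer_new x : st (loc c' x) = EXPLORE -> x = w \/ (x != w /\ st (loc c x) = EXPLORE).
Proof. by case: (eqVneq x w) => [->|xw]; [left|rewrite loc_ne //; right]. Qed.

Let w2_not_explorer : st (loc c w2) <> EXPLORE.
Proof.
case: T => _ _ _ _ [t_deepest _ _] w2e; have := t_deepest _ w2e.
have := depth_edge_rev ew2; rewrite -w_depth => ? ?.
by move/eqP: w2t; apply; apply: (rnd_depth_inj H) => //; lia.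
Qed.

Let descend_tree v : v != r -> awake c' v ->
  [/\ tree_parent c' v, st (loc c' v) = IDLE \/ st (loc c' v) = EXPLORE &
      unvisited K c' v \/ visited K c' v].
Proof.
move=> vr /awakeE va; case: (eqVneq v w) => [->|vw].
  split; [|by right; rewrite loc_w|by right].
  exists t; rewrite loc_w l'_par e_sym; split=> //; first by case: (token_facts H T).
  by apply/awakeE; rewrite /awake te.
have [vtree vst vvis] := rnd_tree H vr va.
split; first by apply: tree_parent_mono vtree => [x /awakeE|]; rewrite ?loc_ne.
  by rewrite loc_ne.
by rewrite unvisited_ne // visited_ne.
Qed.

Let descend_explorer_w : explorer_ok K c' w.
Proof.
split=> //; first by move: w_unvisited; rewrite /unvisited; lia.
  by rewrite loc_w l'_todo l'_par /= subD1set.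
exists w2; rewrite loc_w l'_wait l'_todo setD11; split=> //; [move=> u /awakeE ua|split=> u].
- case: (eqVneq u w) => [->|uw]; first by rewrite loc_w l'_par => -[/eqP]; rewrite (negPf tw).
  rewrite loc_ne // unvisited_ne // => uw' _.
  have [ur _ _ _] := rnd_par_edge H ua uw'.
  exact: (rnd_unvisited_child H ur ua uw' wr w_unvisited).
- move=> /awakeE ua; case: (eqVneq u w) => [->|uw].
    by rewrite loc_w l'_par => -[/eqP]; rewrite (negPf tw).
  rewrite loc_ne // => uw'; have [_ euw _ _] := rnd_par_edge H ua uw'.
  have ut : u != t by apply: contra_not_neq (rnd_par_not_mutual H wa w_par) => <-.
  by rewrite !inE ut e_sym euw !andbT => /negP.
- move=> ewu; case: (eqVneq u t) => [->|ut].
    by move=> _ _; apply/awakeE; rewrite /awake te.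
  by rewrite !inE ewu ut !andbT => /negP.
Qed.

Let descend_explorer_ne x : x != w -> st (loc c x) = EXPLORE -> explorer_ok K c' x.
Proof.
move=> xw xe; case: T => _ t_wait _ _ _.
have [dx xvis xsub [w0 [xw0 ew0 w0t kids_todo [kids_done nbrs_aw]]]] := rnd_explorer H xe.
split=> //; [by rewrite visited_ne|by rewrite loc_ne|].
exists w0; rewrite !loc_ne //; split=> //; [move=> u /awakeE ua|split=> u].
- case: (eqVneq u w) => [->|uw]; last by rewrite loc_ne // unvisited_ne //; apply: kids_todo.
  by rewrite loc_w l'_par => -[<-]; case: (token_facts H T) => _ _ _ /negPf ->.
- move=> /awakeE ua; case: (eqVneq u w) => [->|uw].
    by rewrite loc_w l'_par => -[xt] _; move: xw0; rewrite -xt t_wait => -[->]; rewrite eqxx.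
  by rewrite loc_ne // visited_ne //; apply: kids_done.
- by move=> exu ut uw0; apply/awakeE; apply: nbrs_aw.
Qed.

Let descend_unvisited_child v p : v != r -> awake c' v -> par (loc c' v) = Some p ->
  p != r -> unvisited K c' p -> unvisited K c' v.
Proof.
move=> vr /awakeE va; case: (eqVneq v w) => [->|vw].
  rewrite loc_w l'_par => -[<-] tr; rewrite unvisited_ne //.
  by have [_ /(_ tr) tvis _ _] := rnd_explorer H te; move/(visited_unvisited tvis).
rewrite loc_ne // => vp pr.
case: (eqVneq p w) => [->|pw]; first by move/(visited_unvisited w_visited).
by rewrite !unvisited_ne //; apply: (rnd_unvisited_child H vr va vp pr).
Qed.

Let descend_subtree_done v : v != r -> st (loc c' v) = IDLE -> visited K c' v ->
  depth v < K ->
  (forall u, e v u -> awake c' u) /\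
  (forall u, awake c' u -> par (loc c' u) = Some v -> st (loc c' u) = IDLE /\ visited K c' u).
Proof.
move=> vr; case: (eqVneq v w) => [->|vw]; first by rewrite loc_w l'_st.
rewrite loc_ne // visited_ne // => vi vv dv.
have [nbrs_aw kids] := rnd_subtree_done H vr vi vv dv.
split=> [u /nbrs_aw /awakeE //|u /awakeE ua].
case: (eqVneq u w) => [->|uw]; first by rewrite loc_w l'_par => -[vt]; move: vi; rewrite -vt te.
by rewrite loc_ne // visited_ne // => up; apply: kids.
Qed.

Lemma Inv_round_descend : Inv_round K c'.
Proof.
have [_ t_wait _ _ [t_deepest stack_above _]] := T.
split.
- exact: root_in_round_upd (rnd_root H) wr.
- by move=> v /(rnd_low H) /awakeE.
- move=> v /(rnd_high H) vi; have vw : v != w by apply/eqP => vw; move: vi; rewrite vw w_idle.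
  by rewrite loc_ne.
- exact: descend_tree.
- by move=> x /explorer_new [->|[]]; [apply: descend_explorer_w|apply: descend_explorer_ne].
- move=> x xr /explorer_new [->|[xw xe]].
    by exists t; rewrite loc_w l'_par !(loc_ne tw) te t_wait.
  have [p [xp pe pw]] := rnd_stack H xr xe.
  have pw' : p != w by apply/eqP => pw'; move: pe; rewrite pw' w_idle.
  by exists p; rewrite !loc_ne.
- move=> x y /explorer_new [->|[_ xe]] /explorer_new [->|[_ ye]] //.
  + by have := t_deepest _ ye; lia.
  + by have := t_deepest _ xe; lia.
  + exact: (rnd_depth_inj H).
- exact: descend_unvisited_child.
- exact: descend_subtree_done.
exists w, w2, true; split; rewrite ?loc_w //.
- by rewrite (loc_ne w2w).
- by move=> a a'; apply: (token_pass w w2 T).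
split.
- by move=> y /explorer_new [->//|[_ /t_deepest]]; lia.
- move=> x /explorer_new [->|[xw xe]]; first by rewrite eqxx.
  move=> _; case: (eqVneq x t) => [->|xt]; first by exists w; rewrite loc_w loc_ne.
  have [w' [xw' w'e w'p]] := stack_above x xe xt.
  have w'w : w' != w by apply/eqP => w'w; move: w'e; rewrite w'w w_idle.
  by exists w'; rewrite !loc_ne.
- move=> /awakeE w2a; rewrite loc_ne // => w2p; rewrite unvisited_ne //.
  by apply: (rnd_unvisited_child H _ w2a w2p wr w_unvisited); case: (rnd_par_edge H w2a w2p).
Qed.

End Descend.

Section NextChild.
Variables (K : nat) (c : config V) (t w w2 : V) (l' : local V).
Hypotheses (H : Inv_round K c) (T : token K c t w false)
  (l'_st : st l' = EXPLORE) (l'_par : par l' = par (loc c t)) (l'_cnt : cnt l' = cnt (loc c t))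
  (l'_todo : todo l' = todo (loc c t) :\ w2) (l'_wait : wait l' = Some w2)
  (w2_todo : w2 \in todo (loc c t)) (l'_ph : t = r -> ph l' = MainLoop).

Local Notation c' := (Config (upd_loc (loc c) t l') (send (consume (chan c) w t) t (Some w2))).

Let te : st (loc c t) = EXPLORE. Proof. by case: T. Qed.
Let t_wait : wait (loc c t) = Some w. Proof. by case: T. Qed.
Let wne : st (loc c w) <> EXPLORE. Proof. by case: T. Qed.
Let loc_t : loc c' t = l'. Proof. by rewrite /= upd_loc_eq. Qed.
Let loc_ne x : x != t -> loc c' x = loc c x. Proof. by move=> xt; rewrite /= upd_loc_ne. Qed.

Let E : same_status c c'.
Proof. by move=> x; case: (eqVneq x t) => [->|/loc_ne ->]; rewrite ?loc_t ?l'_st ?te. Qed.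

Let Est x : st (loc c' x) = st (loc c x). Proof. by case: (E x). Qed.
Let Epar x : par (loc c' x) = par (loc c x). Proof. by case: (E x). Qed.
Let Eaw x : awake c' x <-> awake c x. Proof. by rewrite /awake Est. Qed.
Let Eunv x : unvisited K c' x = unvisited K c x.
Proof. by case: (E x) => _ _ cx; rewrite /unvisited cx. Qed.
Let Evis x : visited K c' x = visited K c x.
Proof. by case: (E x) => _ _ cx; rewrite /visited cx. Qed.

Let w2_nbr : w2 \in nbrs e t :\: parset (par (loc c t)).
Proof. by have [_ _ sub _] := rnd_explorer H te; apply: (subsetP sub). Qed.
Let etw2 : e t w2. Proof. by move: w2_nbr; rewrite in_setD in_set => /andP[]. Qed.

(* An explorer adjacent to t has depth [depth t] or [depth t - 1]; as there is one
   explorer per depth, it is t or t's parent, and neither is in t's todo set. *)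
Let w2_not_explorer : st (loc c w2) <> EXPLORE.
Proof.
move=> w2e; have [_ _ _ _ [t_deepest _ _]] := T.
have w2t : w2 != t by apply: contraTneq etw2 => ->; rewrite e_irr.
have le1 := t_deepest _ w2e; have le2 := depth_edge_rev etw2.
have [dw2|ndw2] := eqVneq (depth w2) (depth t).
  by move: w2t; rewrite (rnd_depth_inj H w2e te dw2) eqxx.
have tr : t != r by apply/eqP => tr; move: ndw2 le1; rewrite tr depth_root; lia.
have [p [tp pe _]] := rnd_stack H tr te.
have ta : awake c t by rewrite /awake te.
have [_ _ dtp _] := rnd_par_edge H ta tp.
have w2p : w2 = p by apply: (rnd_depth_inj H w2e pe); move: ndw2; lia.
by move: w2_nbr; rewrite tp w2p !inE eqxx.
Qed.
Let next_explorer_t : explorer_ok K c' t.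
Proof.
have [_ _ _ _ [_ _ [wa w_kid]]] := T.
have [dt tvis sub [w0 [tw0 _ _ kids_todo [kids_done nbrs_aw]]]] := rnd_explorer H te.
move: tw0 kids_done nbrs_aw; rewrite t_wait => -[<-] kids_done nbrs_aw.
split=> //; first by rewrite Evis.
  by rewrite loc_t l'_todo l'_par; apply: subset_trans sub; apply: subD1set.
exists w2; rewrite loc_t l'_wait l'_todo setD11; split=> //; [|split].
- by move=> u /Eaw ua; rewrite Epar Eunv in_setD1 => up /andP[_]; apply: kids_todo.
- move=> u /Eaw ua; rewrite Epar Est Evis in_setD1 => up /[swap] uw2; rewrite uw2 /= => ut.
  case: (eqVneq u w) => [uw|uw]; last exact: kids_done.
  by rewrite uw in up *; apply: w_kid.
- move=> u etu; rewrite in_setD1 => /[swap] uw2; rewrite uw2 /= => ut; apply/Eaw.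
  by case: (eqVneq u w) => [->|uw] //; apply: nbrs_aw.
Qed.

Let next_explorer_ne x : x != t -> st (loc c x) = EXPLORE -> explorer_ok K c' x.
Proof.
move=> xt /(rnd_explorer H) [dx xvis sub [w1 [xw1 ? ? kids_todo [kids_done nbrs_aw]]]].
split=> //; [by rewrite Evis|by rewrite loc_ne // Epar|].
exists w1; rewrite !loc_ne //; split=> //.
  by move=> u /Eaw ua; rewrite Epar Eunv; apply: kids_todo.
split; first by move=> u /Eaw ua; rewrite Epar Est Evis; apply: kids_done.
by move=> u eu ut uw; apply/Eaw; apply: nbrs_aw.
Qed.

Lemma Inv_round_next_child : Inv_round K c'.
Proof.
have [_ _ _ _ [t_deepest stack_above _]] := T.
apply: (Inv_round_same_status H E).
- case: (eqVneq t r) => [tr|rt].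
    by move: (l'_ph tr) (rr_phase (rnd_root H)); rewrite -tr loc_t => -> ->.
  by rewrite loc_ne // eq_sym.
- by move=> x; rewrite Est; case: (eqVneq x t) => [->|]; [move=> _; apply: next_explorer_t|
    apply: next_explorer_ne].
- move=> x xr; rewrite Est => xe; have [p [xp pe pw]] := rnd_stack H xr xe.
  have pt : p != t by apply/eqP => pt; move: pw; rewrite pt t_wait => -[wx]; move: xe; rewrite -wx.
  by exists p; rewrite Epar Est loc_ne.
exists t, w2, true; split; [by rewrite Est|by rewrite loc_t|by rewrite Est| |split].
- by move=> a a'; apply: (token_pass t w2 T).
- by move=> y; rewrite Est => /t_deepest.
- move=> x; rewrite Est => xe xt; have [w' [? ? ?]] := stack_above x xe xt.
  by exists w'; rewrite loc_ne // Est Epar.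
- have [_ _ _ [_ [_ _ _ kids_todo _]]] := rnd_explorer H te.
  by move=> /Eaw w2a; rewrite Epar Eunv => w2p; apply: kids_todo.
Qed.

End NextChild.

Section Ascend.
Variables (K : nat) (c : config V) (t w p : V) (l' : local V).
Hypotheses (H : Inv_round K c) (T : token K c t w false) (tr : t != r)
  (t_todo : todo (loc c t) = set0) (t_par : par (loc c t) = Some p)
  (l'_st : st l' = IDLE) (l'_par : par l' = Some p) (l'_cnt : cnt l' = cnt (loc c t)).

Local Notation c' := (Config (upd_loc (loc c) t l') (send (consume (chan c) w t) t (Some p))).

Let te : st (loc c t) = EXPLORE. Proof. by case: T. Qed.
Let t_wait : wait (loc c t) = Some w. Proof. by case: T. Qed.
Let wne : st (loc c w) <> EXPLORE. Proof. by case: T. Qed.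
Let ta : awake c t. Proof. by rewrite /awake te. Qed.
Let loc_t : loc c' t = l'. Proof. by rewrite /= upd_loc_eq. Qed.
Let loc_ne x : x != t -> loc c' x = loc c x. Proof. by move=> xt; rewrite /= upd_loc_ne. Qed.

Let Epar x : par (loc c' x) = par (loc c x).
Proof. by case: (eqVneq x t) => [->|/loc_ne ->]; rewrite ?loc_t ?l'_par. Qed.
Let Eaw x : awake c' x <-> awake c x.
Proof. by case: (eqVneq x t) => [->|xt]; rewrite /awake ?loc_t ?l'_st ?te ?loc_ne. Qed.
Let Eunv x : unvisited K c' x = unvisited K c x.
Proof. by case: (eqVneq x t) => [->|xt]; rewrite /unvisited ?loc_t ?l'_cnt ?loc_ne. Qed.
Let Evis x : visited K c' x = visited K c x.
Proof. by case: (eqVneq x t) => [->|xt]; rewrite /visited ?loc_t ?l'_cnt ?loc_ne. Qed.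
Let explorer_ne x : st (loc c' x) = EXPLORE -> x != t /\ st (loc c x) = EXPLORE.
Proof. by case: (eqVneq x t) => [->|xt]; rewrite ?loc_t ?l'_st // loc_ne. Qed.

Let pe : st (loc c p) = EXPLORE.
Proof. by have [q [tq qe _]] := rnd_stack H tr te; move: tq; rewrite t_par => -[->]. Qed.
Let p_wait : wait (loc c p) = Some t.
Proof. by have [q [tq _ qw]] := rnd_stack H tr te; move: tq; rewrite t_par => -[->]. Qed.
Let p_depth : (depth p).+1 = depth t. Proof. by case: (rnd_par_edge H ta t_par). Qed.
Let pt : p != t. Proof. by apply/eqP => pt; move: p_depth; rewrite pt; lia. Qed.

Let ascend_explorer x : st (loc c' x) = EXPLORE -> explorer_ok K c' x.
Proof.
move=> /explorer_ne [xt xe].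
have [dx xvis sub [w1 [xw1 ? ? kids_todo [kids_done nbrs_aw]]]] := rnd_explorer H xe.
split=> //; [by rewrite Evis|by rewrite loc_ne // Epar|].
exists w1; rewrite loc_ne //; split=> //.
  by move=> u /Eaw ua; rewrite Epar Eunv; apply: kids_todo.
split; last by move=> u eu ut uw; apply/Eaw; apply: nbrs_aw.
move=> u /Eaw ua; rewrite Epar Evis => up ut uw1; have ut' : u != t.
  apply/eqP => ut'; move: up; rewrite ut' t_par => -[px].
  by move: p_wait uw1; rewrite ut' px xw1 => -[->]; rewrite eqxx.
by rewrite loc_ne //; apply: kids_done.
Qed.

Let ascend_subtree_done v : v != r -> st (loc c' v) = IDLE -> visited K c' v ->
  depth v < K ->
  (forall u, e v u -> awake c' u) /\
  (forall u, awake c' u -> par (loc c' u) = Some v -> st (loc c' u) = IDLE /\ visited K c' u).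
Proof.
have [_ _ _ _ [_ _ [wa w_kid]]] := T.
move=> vr; case: (eqVneq v t) => [->|vt]; last rewrite loc_ne // Evis => vi vv dv.
  have [_ _ _ [w0 [tw0 _ _ _ [kids_done nbrs_aw]]]] := rnd_explorer H te.
  move: tw0 kids_done nbrs_aw; rewrite t_wait t_todo => -[<-] kids_done nbrs_aw _ _ _.
  split=> u.
    by move=> etu; apply/Eaw; case: (eqVneq u w) => [->|uw] //; apply: nbrs_aw; rewrite ?inE.
  move=> /Eaw ua; rewrite Epar Evis => up.
  have ut : u != t by apply/eqP => ut; move: up; rewrite ut t_par => -[/eqP]; rewrite (negPf pt).
  rewrite loc_ne //; case: (eqVneq u w) => [uw|uw]; last by apply: kids_done; rewrite ?inE.
  by rewrite uw in up *; apply: w_kid.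
have [nbrs_aw kids] := rnd_subtree_done H vr vi vv dv.
split=> u; first by move/nbrs_aw/Eaw.
move=> /Eaw ua; rewrite Epar Evis => up; have ut : u != t.
  by apply/eqP => ut; move: up; rewrite ut t_par => -[pv]; move: vi; rewrite -pv pe.
by rewrite loc_ne //; apply: kids.
Qed.

Lemma Inv_round_ascend : Inv_round K c'.
Proof.
have [_ _ _ _ [t_deepest stack_above [wa _]]] := T.
split.
- exact: root_in_round_upd (rnd_root H) tr.
- by move=> v /(rnd_low H) /Eaw.
- move=> v dv; have vi := rnd_high H dv.
  have vt : v != t by apply/eqP => vt; move: vi; rewrite vt te.
  by rewrite loc_ne.
- move=> v vr /Eaw va; have [vtree vst vvis] := rnd_tree H vr va.
  rewrite Eunv Evis; split=> //; first by apply: tree_parent_mono vtree => [x /Eaw|].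
  by case: (eqVneq v t) => [->|vt]; [left; rewrite loc_t|rewrite loc_ne].
- exact: ascend_explorer.
- move=> x xr /explorer_ne [xt xe]; have [q [xq qe qw]] := rnd_stack H xr xe.
  have qt : q != t by apply/eqP => qt; move: qw; rewrite qt t_wait => -[wx]; move: xe; rewrite -wx.
  by exists q; rewrite Epar !loc_ne.
- by move=> x y /explorer_ne [_ xe] /explorer_ne [_ ye]; apply: (rnd_depth_inj H).
- by move=> v q vr /Eaw va; rewrite Epar !Eunv; apply: (rnd_unvisited_child H).
- exact: ascend_subtree_done.
exists p, t, false; split; [by rewrite loc_ne..|by rewrite loc_t l'_st| |split].
- by move=> a a'; apply: (token_pass t p T).
- move=> y /explorer_ne [yt ye]; have := t_deepest _ ye.
  have : depth y != depth t by apply: contraNneq yt => /(rnd_depth_inj H ye te) ->.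
  by rewrite -p_depth; lia.
- move=> x /explorer_ne [xt xe] xp; have [w' [xw' w'e w'p]] := stack_above x xe xt.
  have w't : w' != t.
    by apply/eqP => w't; move: w'p; rewrite w't t_par => -[/eqP]; rewrite eq_sym (negPf xp).
  by exists w'; rewrite !loc_ne // Epar.
- split; first exact/Eaw.
  by rewrite loc_t l'_st Evis => _; split=> //; case: (rnd_explorer H te) => _ /(_ tr).
Qed.

End Ascend.

Section RoundEnd.
Variables (K : nat) (c : config V) (w : V).
Hypotheses (H : Inv_round K c) (T : token K c r w false) (r_todo : todo (loc c r) = set0).

Let root_kid v : awake c v -> par (loc c v) = Some r -> st (loc c v) = IDLE /\ visited K c v.
Proof.
have [re r_wait _ _ [_ _ [_ w_kid]]] := T.
have [_ _ _ [w0 [rw0 _ _ _ [kids_done _]]]] := rnd_explorer H re.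
move: rw0 kids_done; rewrite r_wait r_todo => -[<-] kids_done va vp.
case: (eqVneq v w) => [vw|vw]; last by apply: kids_done; rewrite ?inE.
by rewrite vw in vp *; apply: w_kid.
Qed.

Let root_nbr_awake u : e r u -> awake c u.
Proof.
have [re r_wait _ _ [_ _ [wa _]]] := T.
have [_ _ _ [w0 [rw0 _ _ _ [_ nbrs_aw]]]] := rnd_explorer H re.
move: rw0 nbrs_aw; rewrite r_wait r_todo => -[<-] nbrs_aw eru.
by case: (eqVneq u w) => [->|uw] //; apply: nbrs_aw; rewrite ?inE.
Qed.

Let round_end_inner v : v != r -> depth v < K -> st (loc c v) = IDLE /\ visited K c v.
Proof.
have [m] := ubnP (depth v); elim: m v => // m IH v /ltnSE vm vr dv.
have [[p [vp _ dp _]] _ _] := rnd_tree H vr (rnd_low H dv).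
case: (eqVneq p r) => [pr|pr]; first by apply: root_kid; [exact: (rnd_low H dv)|rewrite vp pr].
have [pi pv] := IH p (ltac:(lia)) pr (ltac:(lia)).
by have [_ kids] := rnd_subtree_done H pr pi pv (ltac:(lia)); apply: kids (rnd_low H dv) vp.
Qed.

Let round_end_awake v : depth v <= K -> awake c v.
Proof.
rewrite leq_eqVlt => /orP[/eqP dv|]; last exact: rnd_low.
have vr : v != r by apply/eqP => vr; move: (rr_pos (rnd_root H)); rewrite -dv vr depth_root.
have [p [epv dp]] := depth_pred vr.
case: (eqVneq p r) => [pr|pr]; first by apply: root_nbr_awake; rewrite -pr.
have [pi pv] := round_end_inner pr (ltac:(lia)).
by have [nbrs_aw _] := rnd_subtree_done H pr pi pv (ltac:(lia)); apply: nbrs_aw.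
Qed.

Let round_end_visited v : v != r -> awake c v -> st (loc c v) = IDLE /\ visited K c v.
Proof.
move=> vr va; have [dvK|Kdv] := ltnP (depth v) K; first exact: round_end_inner.
have [Kv|_] := ltnP K (depth v); first by case: va; apply: (rnd_high H).
have [_ _ _ _ [r_deepest _ _]] := T.
have vne : st (loc c v) <> EXPLORE.
  by move=> /r_deepest; rewrite depth_root leqn0 depth_eq0 (negPf vr).
have [_ [_|//] [vu|//]] := rnd_tree H vr va.
by move: vu; rewrite /unvisited; lia.
Qed.

Lemma Inv_idle_round_end (l' : local V) : K <> n - 1 ->
  st l' = IDLE -> par l' = None -> cnt l' = K ->
  Inv_idle (Config (upd_loc (loc c) r l') (send (consume (chan c) w r) r None)).
Proof.
move=> Kn l'_st l'_par l'_cnt.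
have loc_ne x : x != r -> upd_loc (loc c) r l' x = loc c x by apply: upd_loc_ne.
have Eaw x : awake (Config (upd_loc (loc c) r l') (send (consume (chan c) w r) r None)) x <->
             awake c x.
  case: (eqVneq x r) => [->|xr]; last by rewrite /awake /= loc_ne.
  by rewrite /awake /= upd_loc_eq l'_st (rr_state (rnd_root H)).
split; rewrite /= ?upd_loc_eq //.
- by rewrite l'_cnt; case: (rr_bound (rnd_root H)); [left; lia|right].
- by move=> a a'; apply: (token_consume T).
split=> v; rewrite l'_cnt.
  split=> [/Eaw va|/round_end_awake/Eaw //].
  by rewrite leqNgt; apply/negP => /(rnd_high H).
move=> vr /Eaw va; have [vi vv] := round_end_visited vr va.
have [vtree _ _] := rnd_tree H vr va.
rewrite /visited /= !loc_ne //; split=> //.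
by apply: tree_parent_mono vtree => [x /Eaw|]; rewrite /= ?loc_ne.
Qed.

Lemma Inv_last_round_end (l' : local V) s : K = n - 1 -> cnt l' = K ->
  (st l' = DONE \/ (st l' = EXPLORE /\ ph l' = DummyLoop)) ->
  Inv_last (Config (upd_loc (loc c) r l') (send (consume (chan c) w r) r s)).
Proof.
move=> Kn l'_cnt l'_st.
have loc_ne x : x != r -> upd_loc (loc c) r l' x = loc c x by apply: upd_loc_ne.
have aw x : awake (Config (upd_loc (loc c) r l') (send (consume (chan c) w r) r s)) x.
  case: (eqVneq x r) => [->|xr].
    by rewrite /awake /= upd_loc_eq; case: l'_st => [->|[-> _]].
  by rewrite /awake /= loc_ne //; apply: round_end_awake; rewrite Kn depth_le_n1.
split; rewrite /= ?upd_loc_eq //; first by rewrite l'_cnt.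
move=> v vr; have va : awake c v by move: (aw v); rewrite /awake /= loc_ne.
have [vtree _ _] := rnd_tree H vr va.
by apply: tree_parent_mono vtree => //; rewrite /= loc_ne.
Qed.

End RoundEnd.

Lemma Inv_round_child_explores K c t w l' s : Inv_round K c -> token K c t w true ->
  st (loc c w) = IDLE -> par (loc c w) = Some t ->
  proceed (start_explore e w (loc c w)) l' s ->
  Inv_round K (Config (upd_loc (loc c) w l') (send (consume (chan c) t w) w s)).
Proof.
move=> H T wi wp pr; have [wr _ _ _ _] := token_facts H T.
have wa : awake c w by rewrite /awake wi.
have [_ _ _ _ [_ _ /(_ wa wp) wu]] := T.
have w_depth : (depth t).+1 = depth w by case: (rnd_par_edge H wa wp).
have cnt_w : cnt (start_explore e w (loc c w)) <> n - 1.
  move: wu; rewrite /unvisited /= => wu.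
  case: (rr_bound (rnd_root H)) => [Kn|/(root_of_n1 w) wr']; last by rewrite wr' eqxx in wr.
  by have := depth_gt0 wr; lia.
case: (proceed_not_last pr cnt_w) => /= [[w2 [w2n -> ->]]|[t0 -> ->]].
  by rewrite wp /= in w2n *; apply: Inv_round_descend.
rewrite wp /= in t0 *.
(* w has no neighbour besides its parent t, so it answers at once, like a leaf. *)
have nbr_t u : e w u -> u = t.
  move=> ewu; apply/eqP; apply: contraT => ut.
  have : u \in nbrs e w :\: [set t] by rewrite !inE ut ewu.
  by rewrite t0 inE.
apply: Inv_round_leaf_reply => //=.
- by move: wu; rewrite /unvisited; lia.
- move=> x xa xp; have [_ exw _ _] := rnd_par_edge H xa xp.
  rewrite e_sym in exw; rewrite (nbr_t x exw) in xp *.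
  exact: (rnd_par_not_mutual H wa wp).
- by move=> _ u /nbr_t ->; case: T => te _; rewrite /awake te.
Qed.

Lemma Inv_round_request K c t w l' s : Inv_round K c -> token K c t w true ->
  handle e w t (loc c w) l' s ->
  Inv_round K (Config (upd_loc (loc c) w l') (send (consume (chan c) t w) w s)).
Proof.
move=> H T hd; have [wr etw _ _ dtK] := token_facts H T.
have [_ _ wne _ _] := T.
have w_idle_init : st (loc c w) = IDLE \/ st (loc c w) = INIT.
  case: (awake_or_init c w) => [wa|]; last by right.
  by have [_ [wi|we] _] := rnd_tree H wr wa; [left|case: wne].
inversion hd as [l wi|l wid wp|l l1 s1 wi wp pr|l l1 s1 we|l wig]; subst.
- have dwK : depth w = K.
    apply/eqP; rewrite eqn_leq (leq_trans (depth_edge etw) dtK) leqNgt /=.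
    by apply/negP => /(rnd_low H); rewrite /awake wi.
  apply: Inv_round_leaf_reply => //=; first by have := depth_edge etw; lia.
  + by move=> x xa /(rnd_par_edge H xa) [_ _ _]; rewrite /awake wi.
  + by rewrite dwK ltnn.
- case: w_idle_init => wi; last by rewrite wi in wid; case: wid.
  exact: Inv_round_sibling_reply.
- exact: Inv_round_child_explores.
- by rewrite we in wne.
- by case: wig => [[wd _]|[we _] //]; case: w_idle_init; rewrite wd.
Qed.

Lemma Inv_round_reply K c t w l' s : Inv_round K c -> token K c t w false ->
  handle e t w (loc c t) l' s ->
  Inv (Config (upd_loc (loc c) t l') (send (consume (chan c) w t) t s)).
Proof.
move=> H T hd; have [te t_wait _ _ _] := T.
inversion hd as [l ti|l ti _|l l1 s1 ti|l l1 s1 _ _ pr|l ti]; subst.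
- by rewrite te in ti.
- by rewrite te in ti; case: ti.
- by rewrite te in ti.
2: by case: ti => [[ti _]|[_ /(_ t_wait)]] //; rewrite te in ti.
have [Kn|nKn] := eqVneq (cnt (loc c t)) (n - 1).
- have tr : t = r.
    apply/eqP; apply: contraT => tr; have [_ /(_ tr) tvis _ _] := rnd_explorer H te.
    case: (rr_bound (rnd_root H)) => [Kn1|/(root_of_n1 t) tr']; last by rewrite tr' eqxx in tr.
    by move: tvis; rewrite /visited Kn; have := depth_gt0 tr; lia.
  subst t; have [_ rph _ rK _ _] := rnd_root H.
  case: (proceed_last pr rph Kn) => /= [[w2 [w2t -> ->]]|[r_todo l'_cnt l'_st]].
    by right; right; left; exists K; apply: Inv_round_next_child.
  by right; right; right; apply: (Inv_last_round_end H T) => //; rewrite ?l'_cnt -rK.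
- case: (proceed_not_last pr (elimN eqP nKn)) => /= [[w2 [w2t -> ->]]|[t_todo -> ->]].
    right; right; left; exists K; apply: Inv_round_next_child => //= tr.
    by rewrite tr; apply: (rr_phase (rnd_root H)).
  case: (eqVneq t r) => [tr|tr].
    subst t; have [_ _ rpar rK _ _] := rnd_root H.
    right; left; rewrite rpar; apply: (Inv_idle_round_end H T) => //=.
    by rewrite -rK; apply/eqP.
  have [p [tp _ _]] := rnd_stack H tr te.
  by right; right; left; exists K; rewrite tp; apply: Inv_round_ascend.
Qed.

Lemma Inv_round_step K c c' : Inv_round K c -> step e r c c' -> Inv c'.
Proof.
move=> H S; case: S H => {c c'} [c ri H|c l' s ri _ H|c v u l' s ch hd H].
- by move: ri; rewrite (rr_state (rnd_root H)).
- by move: ri; rewrite (rr_state (rnd_root H)).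
have [t [w [[] T]]] := rnd_token H; have [_ _ _ tch _] := T; move: ch; rewrite tch lt0b.
- case/andP=> /eqP vt /eqP uw; subst v u.
  by right; right; left; exists K; apply: Inv_round_request.
- by case/andP=> /eqP vw /eqP ut; subst v u; apply: (Inv_round_reply H T hd).
Qed.

Lemma Inv_step c c' : Inv c -> step e r c c' -> Inv c'.
Proof.
case=> [|[|[[K]|]]];
  [exact: Inv_start_step|exact: Inv_idle_step|exact: Inv_round_step|exact: Inv_last_step].
Qed.

Lemma Inv_reachable c : reachable e r c -> Inv c.
Proof. by elim=> [|c0 c1 _ IH /(Inv_step IH)] //; left; apply: Inv_start_init. Qed.

Lemma root_finished_layers c k : Inv c -> 1 <= k -> root_finished r c k ->
  (forall v, dist_is e r v k ->
     st (loc c v) <> INIT /\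
     exists p, par (loc c v) = Some p /\ e v p /\ dist_is e r p (k - 1)) /\
  (forall v d, dist_is e r v d -> k < d -> st (loc c v) = INIT).
Proof.
move=> I k1 [rst rk].
have vr v : depth v = k -> v != r.
  by move=> dv; apply/eqP => vr; move: dv; rewrite vr depth_root; lia.
have parent v : depth v = k -> tree_parent c v ->
    exists p, par (loc c v) = Some p /\ e v p /\ dist_is e r p (k - 1).
  by move=> dv [p [vp ep dp _]]; exists p; do 2!split=> //; apply/dist_isE; lia.
case: I => [[init0 _]|[I|[[K H]|I]]].
- by case: rst; rewrite init0.
- case: I => _ _ _ _ []; rewrite rk => awK tree.
  split=> [v /dist_isE dv|v d /dist_isE <- kd]; last by apply: not_awake => /awK; lia.
  have va : awake c v by apply/awK; lia.
  by have [vtree _ _] := tree v (vr v dv) va; split; last exact: parent.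
- by case: rst; rewrite (rr_state (rnd_root H)).
- case: I => rcnt _ aw tree; split=> [v /dist_isE dv|v d /dist_isE <- kd].
    by split; [apply: aw|apply: parent dv (tree v (vr v dv))].
  by have := depth_le_n1 v; lia.
Qed.

End BFS.

Theorem mainTheorem6 (V : finType) (e : rel V) (r : V)
    (e_sym : symmetric e) (e_irr : irreflexive e)
    (e_conn : forall u v : V, connect e u v)
    (k : nat) (c c' : config V) :
  1 <= k ->
  reachable e r c -> step e r c c' ->
  ~ root_finished r c k -> root_finished r c' k ->
  (forall v : V, dist_is e r v k ->
     st (loc c' v) <> INIT /\
     exists p : V, par (loc c' v) = Some p /\ e v p /\ dist_is e r p (k - 1)) /\
  (forall (v : V) (d : nat), dist_is e r v d -> k < d -> st (loc c' v) = INIT).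
Proof.
move=> k1 reach_c step_cc' _.
have I := Inv_reachable e_sym e_irr e_conn (reach_step reach_c step_cc').
exact: root_finished_layers I k1.
Qed.
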